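(* Let $R$ be a localizable partially ordered commutative ring with $\mathbb{N}\subseteq\mathrm{Loc}(R)$. Then $\mathcal{K}(R)$ is a compact Hausdorff space and $\{r\in R : \widehat r\in \mathscr{C}_\approx(\mathcal{D}_{\mathrm{loc}}(R))^+\} = (R^+)^\ddagger$, where $(R^+)^\ddagger=\{g\in R: \text{there is } h\in R \text{ with } kg+h\in R^+ \text{ for all } k\in\mathbb{N}\}$.
   Context: All rings are commutative with unit $1$; ring morphisms are unital. A partially ordered commutative ring is a commutative ring $R$ with a partial order $\le$ such that $r\le s$ implies $r+t\le s+t$, and whose positive cone $R^+=\{r:0\le r\}$ is closed under multiplication and contains all squares. $\mathbb{N}=\{1,2,\dots\}$, $\mathbb{N}_0=\mathbb{N}\cup\{0\}$. $\mathrm{Loc}(R)$ is the set of $s\in 1+R^+$ such that for all $r\in R$, $rs\in R^+$ implies $r\in R^+$; $R$ is localizable if for every $r\in R$ there is $s\in\mathrm{Loc}(R)$ with $-s\le r\le s$. ($\mathbb{N}\subseteq\mathrm{Loc}(R)$ means the elements $n\cdot1$ lie in $\mathrm{Loc}(R)$.) Admissible domains: for a topological space $Y$, an admissible set of domains is a set $\mathcal{D}$ of open subsets of $Y$ with $Y\in\mathcal{D}$, closed under finite intersections. On $\bigcup_{A\in\mathcal{D}}\mathscr{C}(A)$ define $f+g,fg$ pointwise on $\operatorname{dom}f\cap\operatorname{dom}g$; $f\approx g$ iff $f|_A=g|_A$ for some $A\in\mathcal{D}$, $A\subseteq\operatorname{dom}f\cap\operatorname{dom}g$. The quotient $\mathscr{C}_\approx(\mathcal{D})$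 is a partially ordered commutative ring with $[f]\ge 0$ iff $f|_A\ge0$ pointwise for some $A\in\mathcal{D}$, $A\subseteq\operatorname{dom}f$. Localization: $R_{\mathrm{loc}}$ consists of fractions $r/s$ ($r\in R$, $s\in\mathrm{Loc}(R)$), $r/s=r'/s'$ iff $rs'=r's$, usual operations, ordered by $p/q\le r/s$ iff $ps\le rq$. $R^{\mathrm{bd}}_{\mathrm{loc}}=\{a\in R_{\mathrm{loc}}:\exists n\in\mathbb{N}_0,\ -n\le a\le n\}$ (a subring). $\mathcal{K}(R)$ is the set of ring morphisms $\varphi\colon R^{\mathrm{bd}}_{\mathrm{loc}}\to\mathbb{R}$ with $\varphi(a)\ge 0$ whenever $a\ge0$, with the weak-$*$ topology (generated by $\{\varphi:\varphi(a)\in V\}$, $a\in R^{\mathrm{bd}}_{\mathrm{loc}}$, $V\subseteq\mathbb{R}$ open). For $s\in\mathrm{Loc}(R)$, $\mathrm{O}_{s<\infty}=\{\varphi:\varphi(1/s)>0\}$; $\mathcal{D}_{\mathrm{loc}}(R)=\{\mathrm{O}_{s<\infty}:s\in\mathrm{Loc}(R)\}$ is admissible. The extended Gelfand transformation sends $r\in R$ to $\widehat r$, the class of $r_s\colon\mathrm{O}_{s<\infty}\to\mathbb{R}$, $\varphi\mapsto\varphi(1/s)^{-1}\varphi(r/s)$, for any $s\in\mathrm{Loc}(R)$ with $r/s\in R^{\mathrm{bd}}_{\mathrm{loc}}$ (independent of $s$). *)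

From HB Require Import structures.
From mathcomp Require Import all_boot all_order all_algebra.
From mathcomp Require Import all_classical all_reals all_analysis.
From mathcomp Require Import Rstruct Rstruct_topology.
From Stdlib Require Rdefinitions.
Notation R := Rdefinitions.R.

Set Implicit Arguments.
Unset Strict Implicit.
Unset Printing Implicit Defensive.
Import Order.TTheory GRing.Theory Num.Theory.
Local Open Scope classical_set_scope.
Local Open Scope ring_scope.

Section PORing.
Variables (A : comPzRingType) (le : A -> A -> Prop).

Definition po_comring : Prop :=
  (forall r, le r r) /\
  (forall r s, le r s -> le s r -> r = s) /\
  (forall r s t, le r s -> le s t -> le r t) /\
  (forall r s t, le r s -> le (r + t) (s + t)) /\
  (forall r s, le 0 r -> le 0 s -> le 0 (r * s)) /\
  (forall r, le 0 (r * r)).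

Definition Loc (s : A) : Prop :=
  (exists p, le 0 p /\ s = 1 + p) /\ (forall r, le 0 (r * s) -> le 0 r).

Definition localizable : Prop :=
  forall r, exists s, Loc s /\ le (- s) r /\ le r s.

Definition nat_in_Loc : Prop := forall n : nat, (0 < n)%nat -> Loc n%:R.

(* Elements r/s of A_loc are represented by pairs (r, s) with Loc s;
   (r,s) ~ (r',s') iff r s' = r' s.  Order: p/q <= r/s iff p s <= r q. *)
Definition loc_le (p q : A * A) : Prop := le (p.1 * q.2) (q.1 * p.2).

Definition in_bd (p : A * A) : Prop :=
  Loc p.2 /\ exists n : nat, loc_le ((- n%:R), 1) p /\ loc_le p (n%:R, 1).

(* A character phi : A^bd_loc -> R, encoded as a function on pairs which
   vanishes off the (representatives of elements of) A^bd_loc. *)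
Definition is_char (phi : A * A -> R) : Prop :=
  (forall p, ~ in_bd p -> phi p = (0 : R)) /\
  (forall p q, in_bd p -> in_bd q -> p.1 * q.2 = q.1 * p.2 -> phi p = phi q) /\
  (forall p q, in_bd p -> in_bd q ->
      phi (p.1 * q.2 + q.1 * p.2, p.2 * q.2) = (phi p + phi q)) /\
  (forall p q, in_bd p -> in_bd q ->
      phi (p.1 * q.1, p.2 * q.2) = (phi p * phi q)) /\
  phi ((1 : A), (1 : A)) = (1 : R) /\
  (forall p, in_bd p -> loc_le (0, 1) p -> (0 <= phi p)).

(* The ambient space: functions on pairs with the pointwise (product)
   topology; on K(A) this induces the weak-* topology. *)
Definition charT := {ptws (A * A) -> R}.

Definition Kspace : set charT := [set phi | is_char phi].

Definition O_fin (s : A) : set charT := [set phi | Kspace phi /\ (0 < phi ((1 : A), s))].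

Definition D_loc : set (set charT) := [set O | exists s, Loc s /\ O = O_fin s].

(* the representative r_s : O_{s<oo} -> R of the extended Gelfand transform *)
Definition gelfand_rep (r s : A) (phi : charT) : R :=
  ((phi ((1 : A), s))^-1 * phi (r, s)).

Definition pos_dagger : set A :=
  [set g | exists h, forall k : nat, (0 < k)%nat -> le 0 (k%:R * g + h)].

End PORing.

Definition capprox_nonneg (Y : Type) (D : set (set Y)) (dom : set Y) (f : Y -> R) : Prop :=
  exists B, D B /\ B `<=` dom /\ (forall y, B y -> (0 <= f y)).

Definition gelfand_nonneg (A : comPzRingType) (le : A -> A -> Prop) (r : A) : Prop :=
  exists s, Loc le s /\ in_bd le (r, s) /\
    capprox_nonneg (D_loc le) (O_fin le s) (gelfand_rep r s).

From HB Require Import structures.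
From mathcomp Require Import all_boot all_order all_algebra.
From mathcomp Require Import all_classical all_reals all_analysis.
From mathcomp Require Import Rstruct Rstruct_topology.
From mathcomp Require Import ring lra zify.
Import Order.TTheory GRing.Theory Num.Theory.
Set Implicit Arguments.
Unset Strict Implicit.
Unset Printing Implicit Defensive.
Local Open Scope classical_set_scope.
Local Open Scope ring_scope.

(* The positive elements of R^bd_loc form an Archimedean preprime, since every
   element lies between -n and n.  So the Kadison-Dubois theorem applies: if k b + 1
   is not positive for some k > 0, some positive character phi has phi b < 0.  (Zorn's
   lemma extends P - (2 k b + 1) P to a maximal proper cone, which is a total order,
   and Dedekind cuts in that order give the character.)
   If r/s is bounded and r^ >= 0 on O_{t<oo}, then k r + s t >= 0 for all k, so r lies
   in (R^+)^dagger with h = s t: otherwise the character obtained for b = r/(s t)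
   satisfies phi(r/s) phi(1/t) < 0, hence lies in O_{t<oo} with r^(phi) < 0.
   Conversely, if k g + h >= 0 for all k, every character positive on 1/(s t) satisfies
   k phi(g/(s t)) >= - phi(h/(s t)) >= -1, so g^ >= 0 on O_{s t<oo}.
   K(R) is closed in the product of the compact intervals [-n_p, n_p] bounding the
   fractions p, so it is compact by Tychonoff, and Hausdorff as a subspace of a
   product of copies of R. *)

Section AdditiveMaps.
Variables (U V : zmodType) (f : U -> V).
Hypothesis fD : forall x y, f (x + y) = f x + f y.

Lemma additive0 : f 0 = 0.
Proof. by apply: (addrI (f 0)); rewrite -fD !addr0. Qed.

Lemma additiveN x : f (- x) = - f x.
Proof. by apply/eqP; rewrite -addr_eq0 -fD addNr additive0. Qed.

Lemma additiveB x y : f (x - y) = f x - f y.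
Proof. by rewrite fD additiveN. Qed.

Lemma additiveMn x n : f (x *+ n) = f x *+ n.
Proof. by elim: n => [|n IH]; rewrite ?additive0 // !mulrS fD IH. Qed.

Lemma additiveMz x m : f (x *~ m) = f x *~ m.
Proof.
case: m => n; first by rewrite -!pmulrn additiveMn.
by rewrite NegzE !mulrNz -!pmulrn additiveN additiveMn.
Qed.

End AdditiveMaps.

Lemma natmul_lbounded_ge0 (F : archiRealFieldType) (a K : F) :
  (forall n : nat, (0 < n)%N -> - K <= n%:R * a) -> 0 <= a.
Proof.
move=> bounded; rewrite leNgt; apply/negP => a_lt0.
have := bounded (Num.truncn (K / - a)).+1 isT; apply/negP; rewrite -ltNge.
rewrite -ltrN2 opprK -mulrN -ltr_pdivrMr ?oppr_gt0 //.
exact: Num.Theory.truncnS_gt.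
Qed.

Lemma natmul_bounded_eq0 (F : archiRealFieldType) (d K : F) :
  (forall n : nat, (0 < n)%N -> `|n%:R * d| <= K) -> d = 0.
Proof.
move=> bounded; apply/eqP; rewrite eq_le -oppr_ge0.
have bounds n : (0 < n)%N -> - K <= n%:R * d /\ n%:R * d <= K.
  by move/bounded; rewrite ler_norml => /andP.
apply/andP; split; apply: (@natmul_lbounded_ge0 _ _ K) => n /bounds [] //.
by rewrite mulrN lerN2.
Qed.

Lemma bernoulli_expn (x m : nat) : (x ^ m * (x + m) <= (x + 1) ^ m * x)%N.
Proof.
elim: m => [|m IH]; first by rewrite !expn0 addn0 !mul1n.
rewrite !expnS.
have IH1 : ((x + 1) * (x ^ m * (x + m)) <= (x + 1) * ((x + 1) ^ m * x))%N.
  by rewrite leq_mul2l IH orbT.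
nia.
Qed.

Lemma expnD1_dominates (x M : nat) : (0 < x)%N -> exists m, (M * x ^ m <= (x + 1) ^ m)%N.
Proof.
move=> x_gt0; exists (M * x)%N; rewrite -(leq_pmul2r x_gt0).
have := bernoulli_expn x (M * x); nia.
Qed.

Section ArchimedeanPreprime.
Variables (B : comPzRingType) (P : B -> Prop).
Hypotheses (P_add : forall x y, P x -> P y -> P (x + y))
  (P_mul : forall x y, P x -> P y -> P (x * y))
  (P_sq : forall x, P (x * x))
  (P_arch : forall x, exists n : nat, P (n%:R - x) /\ P (n%:R + x))
  (P_invn : forall n : nat, (0 < n)%N -> exists2 y, P y & n%:R * y = 1).

Lemma P1 : P 1. Proof. by rewrite -(mulr1 1). Qed.
Lemma P0 : P 0. Proof. by rewrite -(mulr0 0). Qed.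

Lemma P_nat n : P n%:R.
Proof. by elim: n => [|n IH]; [exact: P0 | rewrite -addn1 natrD; apply: P_add IH P1]. Qed.

Lemma P_natD x n : P x -> P (x + n%:R).
Proof. by move=> Px; apply: P_add Px (P_nat n). Qed.

Lemma P_exp x m : P x -> P (x ^+ m).
Proof.
by move=> Px; elim: m => [|m IH]; [rewrite expr0; exact: P1 | rewrite exprS; apply: P_mul].
Qed.

Lemma P_divn n x : (0 < n)%N -> P (n%:R * x) -> P x.
Proof.
move=> n_gt0 Pnx; have [y Py ny1] := P_invn n_gt0.
have -> : x = y * (n%:R * x) by rewrite mulrA (mulrC y) ny1 mul1r.
exact: P_mul.
Qed.

Lemma P_arch_gt x (k : nat) : exists n : nat, [/\ (k < n)%N, P (n%:R - x) & P (n%:R + x)].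
Proof.
have [n [Pl Pr]] := P_arch x; exists (n + k.+1)%N; split; first by rewrite ltn_addl.
- by rewrite natrD addrAC; apply: P_natD.
- by rewrite natrD addrAC; apply: P_natD.
Qed.

Lemma P_mul_subrX c x y m : P x -> P y -> P (c * (x - y)) -> P (c * (x ^+ m - y ^+ m)).
Proof.
move=> Px Py Pcxy; elim: m => [|m IH]; first by rewrite subrr mulr0; exact: P0.
have -> : c * (x ^+ m.+1 - y ^+ m.+1) = x ^+ m * (c * (x - y)) + y * (c * (x ^+ m - y ^+ m)).
  by rewrite !exprS; ring.
by apply: P_add; apply: P_mul => //; apply: P_exp.
Qed.

Section InverseBound.
Variables (c p q : B) (N M x : nat).
Hypotheses (Pp : P p) (Pq : P q) (cpq : c * p = 1 + q) (PNp : P (N%:R - p))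
  (PMc : P (M%:R - c)) (PcM : P (M%:R + c)) (NM : x.+1 = (N * M)%N).

(* The key estimate c >= - M (x / (x + 1))^m: multiplied by N^m, the element below
   becomes a sum of positive terms built from u := N - p, using x + 1 = N M. *)
Lemma P_expn_scaled_bound m : P (x.+1%:R ^+ m * c + M%:R * x%:R ^+ m).
Proof.
have N_gt0 : (0 < N)%N by move: NM; case: N.
pose u := N%:R - p; pose al := x.+1%:R * u; pose be := N%:R * x%:R : B.
have PMp1 : P (M%:R * p - 1).
  have -> : M%:R * p - 1 = p * (M%:R - c) + q + (c * p - (1 + q)) by ring.
  rewrite cpq subrr addr0.
  by apply: P_add => //; apply: P_mul.
have Pal : P al by apply: P_mul; [exact: P_nat | exact: PNp].
have Pbe : P be by rewrite /be -natrM; apply: P_nat.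
have Pcu : P (c * (N%:R ^+ m - u ^+ m)).
  apply: P_mul_subrX; [exact: P_nat | exact: PNp |].
  by rewrite /u opprB addrC subrK cpq; apply: P_add P1 Pq.
have Pba : P (1 * (be ^+ m - al ^+ m)).
  apply: P_mul_subrX => //; rewrite mul1r.
  have xE : x%:R = N%:R * M%:R - 1 :> B by rewrite -natrM -NM -addn1 natrD addrK.
  have -> : be - al = N%:R * (M%:R * p - 1) by rewrite /be /al /u xE NM natrM; ring.
  by apply: P_mul => //; exact: P_nat.
apply: (@P_divn (N ^ m)); first by rewrite expn_gt0 N_gt0.
have -> : (N ^ m)%:R * (x.+1%:R ^+ m * c + M%:R * x%:R ^+ m)
   = x.+1%:R ^+ m * (c * (N%:R ^+ m - u ^+ m)) + al ^+ m * (M%:R + c)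
     + M%:R * (1 * (be ^+ m - al ^+ m)).
  by rewrite natrX /al /be !exprMn; ring.
apply: P_add; first apply: P_add.
- by apply: P_mul => //; apply/P_exp/P_nat.
- by apply: P_mul => //; apply: P_exp.
- by apply: P_mul => //; exact: P_nat.
Qed.

End InverseBound.

Lemma P_addr1_of_mul_eq_1D c p q : P p -> P q -> c * p = 1 + q -> P (c + 1).
Proof.
move=> Pp Pq cpq.
have [N [N_gt0 PNp _]] := P_arch_gt p 0.
have [M [M_gt1 PMc PcM]] := P_arch_gt c 1.
pose x := (N * M).-1.
have NM : x.+1 = (N * M)%N by rewrite /x prednK // muln_gt0 N_gt0 ltnW.
have x_gt0 : (0 < x)%N by rewrite /x; nia.
have [m Mx] := expnD1_dominates M x_gt0.
apply: (@P_divn ((x + 1) ^ m)); first by rewrite expn_gt0 addn1.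
have -> : ((x + 1) ^ m)%:R * (c + 1)
    = (x.+1%:R ^+ m * c + M%:R * x%:R ^+ m) + ((x + 1) ^ m - M * x ^ m)%:R.
  by rewrite natrB // natrM !natrX addn1; ring.
by apply/P_natD/(P_expn_scaled_bound Pp Pq cpq PNp PMc PcM NM).
Qed.

Section CutValue.
Variables (F : realType) (T : B -> Prop).
Hypotheses (P_T : forall x, P x -> T x) (T_add : forall x y, T x -> T y -> T (x + y))
  (T_mul : forall x y, T x -> T y -> T (x * y)) (T_neg1 : ~ T (-1))
  (T_total : forall x, T x \/ T (- x)).

Lemma T_oppn j : (0 < j)%N -> ~ T (- j%:R).
Proof.
move=> j_gt0 Tj; have [y Py jy1] := P_invn j_gt0.
by apply: T_neg1; rewrite -jy1 -mulNr; apply: T_mul => //; apply: P_T.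
Qed.

Lemma T_int_ge0 (d : int) : T d%:~R -> 0 <= d.
Proof. by case: d => // j; rewrite NegzE intrN => /(@T_oppn j.+1 isT). Qed.

Lemma T_cut_le x (m m' : int) (n n' : nat) :
  T (n%:R * x - m%:~R) -> T (m'%:~R - n'%:R * x) -> m * n' <= m' * n.
Proof.
move=> Tm Tm'; rewrite -subr_ge0; apply: T_int_ge0.
have -> : (m' * n - m * n')%:~R = n'%:R * (n%:R * x - m%:~R) + n%:R * (m'%:~R - n'%:R * x) :> B.
  by rewrite intrD intrN !intrM; ring.
by apply: T_add; apply: T_mul => //; apply/P_T/P_nat.
Qed.

(* The real number that the Archimedean total order T assigns to x: the supremum
   of the rationals below x. *)
Definition lower_cut x : set F :=
  [set r | exists m : int, exists2 n : nat, (0 < n)%N & r = m%:~R / n%:R /\ T (n%:R * x - m%:~R)].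

Definition cut_value x : F := sup (lower_cut x).

Lemma lower_cut_ub x (m : int) (n : nat) : (0 < n)%N -> T (m%:~R - n%:R * x) ->
  ubound (lower_cut x) (m%:~R / n%:R).
Proof.
move=> n_gt0 Tm _ [m1 [n1 n1_gt0 [-> Tm1]]].
rewrite ler_pdivrMr ?ltr0n // mulrAC ler_pdivlMr ?ltr0n //.
rewrite -[n%:R]/((n%:Z)%:~R) -[n1%:R]/((n1%:Z)%:~R) -!intrM ler_int.
exact: T_cut_le Tm1 Tm.
Qed.

Lemma lower_cut_has_sup x : has_sup (lower_cut x).
Proof.
have [N [_ PNx PxN]] := P_arch_gt x 0; split.
  exists ((- N%:Z)%:~R / 1%:R), (- N%:Z), 1%N => //; split => //.
  by apply: P_T; rewrite intrN mul1r opprK addrC.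
exists ((N%:Z)%:~R / 1%:R); apply: (@lower_cut_ub x N%:Z 1) => //.
by apply: P_T; rewrite mul1r.
Qed.

Lemma le_cut_value x (m : int) (n : nat) : (0 < n)%N -> T (n%:R * x - m%:~R) ->
  m%:~R <= n%:R * cut_value x.
Proof.
move=> n_gt0 Tm; rewrite -ler_pdivrMl ?ltr0n // mulrC.
by apply: (sup_upper_bound (lower_cut_has_sup x)); exists m, n.
Qed.

Lemma cut_value_le x (m : int) (n : nat) : (0 < n)%N -> T (m%:~R - n%:R * x) ->
  n%:R * cut_value x <= m%:~R.
Proof.
move=> n_gt0 Tm; rewrite -ler_pdivlMl ?ltr0n // mulrC.
by apply: ge_sup; [exact: (lower_cut_has_sup x).1 | exact: lower_cut_ub].
Qed.

Lemma cut_bracket x (n : nat) : (0 < n)%N ->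
  exists m : int, T (n%:R * x - m%:~R) /\ T ((m + 2)%:~R - n%:R * x).
Proof.
move=> n_gt0; pose k := Num.floor (n%:R * cut_value x).
have k_le : k%:~R <= n%:R * cut_value x by exact: Num.Theory.floor_le.
have k_gt : n%:R * cut_value x < (k + 1)%:~R by exact: Num.Theory.floorD1_gt.
exists (k - 1); split.
- case: (T_total (n%:R * x - (k - 1)%:~R)) => // /[!opprB] /(cut_value_le n_gt0) le_k1.
  by have := le_trans k_le le_k1; rewrite ler_int; lia.
- case: (T_total ((k - 1 + 2)%:~R - n%:R * x)) => // /[!opprB] /(le_cut_value n_gt0) le_k1.
  by have := le_lt_trans le_k1 k_gt; rewrite ltr_int; lia.
Qed.

Lemma cut_value_ge0 x : T x -> 0 <= cut_value x.
Proof. by move=> Tx; have := @le_cut_value x 0 1 isT; rewrite !mul1r subr0; apply. Qed.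

Lemma cut_value_le0 x : T (- x) -> cut_value x <= 0.
Proof. by move=> Tx; have := @cut_value_le x 0 1 isT; rewrite !mul1r sub0r; apply. Qed.

Lemma cut_value1 : cut_value 1 = 1.
Proof.
have T0 : T 0 by apply/P_T/P0.
have := @le_cut_value 1 1 1 isT; have := @cut_value_le 1 1 1 isT.
rewrite /= mulr1 subrr mul1r => /(_ T0) hi /(_ T0) lo.
by apply/eqP; rewrite eq_le hi lo.
Qed.

Lemma cut_valueD x y : cut_value (x + y) = cut_value x + cut_value y.
Proof.
apply/eqP; rewrite -subr_eq0; apply/eqP/(@natmul_bounded_eq0 _ _ 4) => n n_gt0.
have [m1 [Tx1 Tx2]] := cut_bracket x n_gt0.
have [m2 [Ty1 Ty2]] := cut_bracket y n_gt0.
have Txy1 : T (n%:R * (x + y) - (m1 + m2)%:~R).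
  have -> : n%:R * (x + y) - (m1 + m2)%:~R = (n%:R * x - m1%:~R) + (n%:R * y - m2%:~R).
    by rewrite intrD; ring.
  exact: T_add.
have Txy2 : T ((m1 + m2 + 2 + 2)%:~R - n%:R * (x + y)).
  have -> : (m1 + m2 + 2 + 2)%:~R - n%:R * (x + y)
      = ((m1 + 2)%:~R - n%:R * x) + ((m2 + 2)%:~R - n%:R * y) :> B.
    by rewrite !intrD; ring.
  exact: T_add.
have := le_cut_value n_gt0 Tx1; have := cut_value_le n_gt0 Tx2.
have := le_cut_value n_gt0 Ty1; have := cut_value_le n_gt0 Ty2.
have := le_cut_value n_gt0 Txy1; have := cut_value_le n_gt0 Txy2.
rewrite !intrD ler_norml mulrBr mulrDr; move=> *; apply/andP; split; lra.
Qed.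

Lemma monotone_additive_cut_value (psi : B -> F) :
  (forall x y, psi (x + y) = psi x + psi y) -> (forall x, T x -> 0 <= psi x) ->
  forall x, psi x = psi 1 * cut_value x.
Proof.
move=> psiD psi_ge0 x.
have psi_natz (n : nat) (m : int) z : psi (n%:R * z - m%:~R) = n%:R * psi z - m%:~R * psi 1.
  by rewrite additiveB // additiveMz // mulrzl [n%:R * z]mulr_natl additiveMn // mulr_natl.
have psi1_ge0 : 0 <= psi 1 by apply/psi_ge0/P_T/P1.
apply/eqP; rewrite -subr_eq0; apply/eqP/(@natmul_bounded_eq0 _ _ (2 * psi 1)) => n n_gt0.
have [m [Tm1 Tm2]] := cut_bracket x n_gt0.
have lo := le_cut_value n_gt0 Tm1; have hi := cut_value_le n_gt0 Tm2.
have := psi_ge0 _ Tm1; rewrite psi_natz => lo_psi.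
have := psi_ge0 _ Tm2; rewrite -[_ - n%:R * x]opprB additiveN // psi_natz oppr_ge0 => hi_psi.
have := ler_wpM2l psi1_ge0 lo; have := ler_wpM2l psi1_ge0 hi.
move: lo_psi hi_psi; rewrite !intrD ler_norml => *; apply/andP; split; nra.
Qed.

Lemma cut_valueM x y : cut_value (x * y) = cut_value x * cut_value y.
Proof.
have cut_valueMT z : T z -> forall x', cut_value (x' * z) = cut_value z * cut_value x'.
  move=> Tz x'; rewrite -[in cut_value z](mul1r z).
  apply: (monotone_additive_cut_value (psi := fun a => cut_value (a * z))) => [a a'|a Ta].
    by rewrite mulrDl cut_valueD.
  by apply/cut_value_ge0/T_mul.
have [N [_ PNy]] := P_arch y.
have := cut_valueMT (y + N%:R) (P_T _); rewrite addrC => /(_ PNy x).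
rewrite mulrDr !cut_valueD mulr_natr !(additiveMn cut_valueD) cut_value1.
by rewrite mulrDl mulrnAl mul1r [cut_value y * _]mulrC => /addrI.
Qed.

End CutValue.

Definition proper_cone (T : set B) :=
  [/\ P `<=` T, forall x y, T x -> T y -> T (x + y),
      forall x y, T x -> T y -> T (x * y) & ~ T (-1)].

Lemma proper_cone_PsubcP c : ~ P (c + 1) -> proper_cone [set p - c * q | p in P & q in P].
Proof.
move=> NPc1; split.
- by move=> p Pp; exists p => //; exists 0; [exact: P0 | rewrite mulr0 subr0].
- move=> _ _ [p1 Pp1 [q1 Pq1 <-]] [p2 Pp2 [q2 Pq2 <-]].
  by exists (p1 + p2); [exact: P_add | exists (q1 + q2); [exact: P_add | ring]].
- move=> _ _ [p1 Pp1 [q1 Pq1 <-]] [p2 Pp2 [q2 Pq2 <-]].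
  exists (p1 * p2 + (c * c) * (q1 * q2)).
    by apply: P_add; [exact: P_mul | apply: P_mul; [exact: P_sq | exact: P_mul]].
  by exists (p1 * q2 + q1 * p2); [apply: P_add; apply: P_mul | ring].
- move=> [p Pp [q Pq cq]]; apply: NPc1; apply: (P_addr1_of_mul_eq_1D Pq Pp).
  have -> : c * q = (p - c * q) * -1 + p by ring.
  by rewrite cq mulrNN mulr1.
Qed.

Definition cone_adjoin (T : set B) a : set B := [set t1 + a * t2 | t1 in T & t2 in T].

Lemma cone_adjoin_cone T a : proper_cone T ->
  [/\ T `<=` cone_adjoin T a, cone_adjoin T a a,
      forall x y, cone_adjoin T a x -> cone_adjoin T a y -> cone_adjoin T a (x + y)
    & forall x y, cone_adjoin T a x -> cone_adjoin T a y -> cone_adjoin T a (x * y)].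
Proof.
move=> [P_T T_add T_mul _]; have T0 := P_T _ P0; have T1 := P_T _ P1; split.
- by move=> z Tz; exists z => //; exists 0 => //; rewrite mulr0 addr0.
- by exists 0 => //; exists 1 => //; rewrite mulr1 add0r.
- move=> _ _ [t1 Tt1 [t2 Tt2 <-]] [t3 Tt3 [t4 Tt4 <-]].
  by exists (t1 + t3); [exact: T_add | exists (t2 + t4); [exact: T_add | ring]].
- move=> _ _ [t1 Tt1 [t2 Tt2 <-]] [t3 Tt3 [t4 Tt4 <-]].
  exists (t1 * t3 + (a * a) * (t2 * t4)).
    have Taa : T (a * a) by apply/P_T/P_sq.
    by apply: (T_add); [exact: T_mul | apply: (T_mul) => //; exact: T_mul].
  by exists (t1 * t4 + t2 * t3); [apply: (T_add); exact: T_mul | ring].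
Qed.

Lemma maximal_proper_cone_total T : proper_cone T ->
  (forall T', proper_cone T' -> T `<=` T' -> T' `<=` T) -> forall a, T a \/ T (- a).
Proof.
move=> Tcone Tmax; have [P_T T_add T_mul T_neg1] := Tcone.
have adjoin a : T a \/ cone_adjoin T a (-1).
  have [|Nadj] := pselect (cone_adjoin T a (-1)); [by right | left].
  have [T_adj adj_a adj_add adj_mul] := cone_adjoin_cone a Tcone.
  by apply: (Tmax (cone_adjoin T a)) => //; split => // z /P_T /T_adj.
move=> a; case: (adjoin a) => [|[t1 Tt1 [t2 Tt2 e1]]]; first by left.
case: (adjoin (- a)) => [|[t3 Tt3 [t4 Tt4 e2]]]; first by right.
exfalso; apply: T_neg1.
have at2 : a * t2 = -1 - t1 by rewrite -e1; ring.
have at4 : a * t4 = 1 + t3.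
  have -> : a * t4 = - (t3 + - a * t4) + t3 by ring.
  by rewrite e2 opprK.
have -> : -1 = t1 + t3 + t1 * t3 + (a * a) * (t2 * t4) by rewrite mulrACA at2 at4; ring.
have Taa : T (a * a) by apply/P_T/P_sq.
apply: (T_add); first by apply: (T_add); [exact: T_add | exact: T_mul].
by apply: (T_mul) => //; exact: T_mul.
Qed.

Lemma bigcup_chain_proper_cone (F : set (set B)) : F !=set0 ->
  (forall T, F T -> proper_cone T) -> total_on F subset -> proper_cone (\bigcup_(T in F) T).
Proof.
move=> [T1 FT1] Fcone Ftot.
have common x y Tx Ty : F Tx -> F Ty -> Tx x -> Ty y -> exists2 T, F T & T x /\ T y.
  move=> FTx FTy Txx Tyy; have [TxTy|TyTx] := Ftot _ _ FTx FTy.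
  - by exists Ty => //; split=> //; exact: TxTy.
  - by exists Tx => //; split=> //; exact: TyTx.
have [P_T1 _ _ _] := Fcone _ FT1; split.
- by move=> z /P_T1; exists T1.
- move=> x y [Tx FTx Txx] [Ty FTy Tyy]; have [T FT [Tx' Ty']] := common _ _ _ _ FTx FTy Txx Tyy.
  by have [_ T_add _ _] := Fcone _ FT; exists T => //; exact: T_add.
- move=> x y [Tx FTx Txx] [Ty FTy Tyy]; have [T FT [Tx' Ty']] := common _ _ _ _ FTx FTy Txx Tyy.
  by have [_ _ T_mul _] := Fcone _ FT; exists T => //; exact: T_mul.
- by move=> [T FT]; have [_ _ _] := Fcone _ FT.
Qed.

Lemma exists_maximal_proper_cone T0 : proper_cone T0 ->
  exists T, [/\ proper_cone T, T0 `<=` T &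
    forall T', proper_cone T' -> T `<=` T' -> T' `<=` T].
Proof.
move=> T0cone.
(* The empty set is admitted so that the empty chain has an upper bound. *)
pose cones := [set T : set B | T = set0 \/ proper_cone T /\ T0 `<=` T].
have nonempty_cone T z : cones T -> T z -> proper_cone T /\ T0 `<=` T by move=> [->|].
have [T [coneT Tmax]] : exists T, cones T /\ forall T', T `<` T' -> ~ cones T'.
  apply: Zorn_bigcup => F Fcones Ftot; pose F' := [set T | F T /\ T !=set0].
  have -> : \bigcup_(T in F) T = \bigcup_(T in F') T.
    apply/seteqP; split=> z [T FT Tz]; exists T => //; [by split=> //; exists z | exact: FT.1].
  have [[T1 [FT1 [z1 T1z1]]]|F'0] := pselect (F' !=set0); last first.
    by left; apply/seteqP; split=> // z [T F'T _]; apply: F'0; exists T.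
  right; split; last first.
    move=> z /(nonempty_cone _ _ (Fcones _ FT1) T1z1).2 T1z.
    by exists T1 => //; split=> //; exists z1.
  apply: bigcup_chain_proper_cone; first by exists T1; split=> //; exists z1.
    by move=> T [FT [z Tz]]; exact: (nonempty_cone _ _ (Fcones _ FT) Tz).1.
  by move=> T T' [FT _] [FT' _]; exact: Ftot.
have [Tcone T0T] : proper_cone T /\ T0 `<=` T.
  case: coneT => // T_eq0; exfalso; apply: (Tmax T0); last by right; split.
  rewrite T_eq0; split => // /(_ 0); apply; case: T0cone => + _ _ _; apply; exact: P0.
exists T; split => // T' T'cone TT' z T'z; apply: contrapT => NTz.
apply: (Tmax T'); first by split => // /(_ z T'z).
by right; split => //; exact: subset_trans TT'.
Qed.

Theorem Kadison_Dubois (F : realType) b (k : nat) : (0 < k)%N -> ~ P (k%:R * b + 1) ->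
  exists phi : B -> F, [/\ forall x y, phi (x + y) = phi x + phi y,
    forall x y, phi (x * y) = phi x * phi y, phi 1 = 1,
    forall x, P x -> 0 <= phi x & phi b < 0].
Proof.
(* c + 1 = 2 (k b + 1) keeps -1 out of P - c P, and phi c <= 0 forces phi b < 0. *)
move=> k_gt0 NPkb; pose c := (2 * k)%:R * b + 1.
have NPc1 : ~ P (c + 1).
  move=> Pc1; apply: NPkb; apply: (@P_divn 2) => //.
  by have -> : 2%:R * (k%:R * b + 1) = c + 1 by rewrite /c natrM; ring.
have [T [Tcone PcPT Tmax]] := exists_maximal_proper_cone (proper_cone_PsubcP NPc1).
have T_total := maximal_proper_cone_total Tcone Tmax.
have [P_T T_add T_mul T_neg1] := Tcone.
have cvD x y : cut_value F T (x + y) = cut_value F T x + cut_value F T y.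
  exact: cut_valueD.
have cv1 : cut_value F T 1 = 1 by exact: cut_value1.
exists (cut_value F T); split => //.
- exact: cut_valueM.
- by move=> x /P_T; apply: cut_value_ge0.
have : cut_value F T c <= 0.
  apply: cut_value_le0 => //; apply: PcPT; exists 0; first exact: P0.
  by exists 1; [exact: P1 | rewrite mulr1 sub0r].
rewrite /c cvD cv1 mulr_natl (additiveMn cvD) -mulr_natl.
have : (0 : F) < (2 * k)%:R by rewrite ltr0n muln_gt0.
nra.
Qed.

End ArchimedeanPreprime.

Section PartiallyOrderedRing.
Variables (A : comPzRingType) (le : A -> A -> Prop).
Hypotheses (po : po_comring le) (nL : nat_in_Loc le).
Local Notation P x := (le 0 x).

Lemma po_leP x y : le x y <-> P (y - x).
Proof.
have [_ [_ [_ [le_add _]]]] := po; split=> [/(le_add _ _ (- x))|/(le_add _ _ x)].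
  by rewrite subrr.
by rewrite add0r subrK.
Qed.

Lemma pos0 : P 0. Proof. by case: po. Qed.
Lemma pos_mul x y : P x -> P y -> P (x * y). Proof. by case: po => _ [_ [_ [_ [+ _]]]]; apply. Qed.
Lemma pos_sq x : P (x * x). Proof. by case: po => _ [_ [_ [_ [_ +]]]]. Qed.
Lemma pos1 : P 1. Proof. by rewrite -(mulr1 1); apply: pos_sq. Qed.

Lemma pos_add x y : P x -> P y -> P (x + y).
Proof.
have [_ [_ [le_trans [le_add _]]]] := po.
by move=> Px /(le_add _ _ x); rewrite add0r addrC; apply: le_trans.
Qed.

Lemma pos_nat n : P n%:R.
Proof. by elim: n => [|n IH]; [exact: pos0 | rewrite mulrS; apply: pos_add IH; exact: pos1]. Qed.

Lemma pos_anti x : P x -> P (- x) -> x = 0.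
Proof.
move=> Px PNx; have [_ [le_anti _]] := po; apply: le_anti Px.
by apply/po_leP; rewrite sub0r.
Qed.

Lemma Loc_pos s : Loc le s -> P s.
Proof. by move=> [[p [Pp ->]] _]; apply: pos_add pos1 Pp. Qed.

Lemma Loc_subr1 s : Loc le s -> P (s - 1).
Proof. by move=> [[p [Pp ->]] _]; rewrite addrAC subrr add0r. Qed.

Lemma Loc_divr s x : Loc le s -> P (x * s) -> P x.
Proof. by move=> [_]; apply. Qed.

Lemma Loc1 : Loc le 1.
Proof. by split=> [|r]; [exists 0; split; [exact: pos0 | rewrite addr0] | rewrite mulr1]. Qed.

Lemma LocM s t : Loc le s -> Loc le t -> Loc le (s * t).
Proof.
move=> Ls Lt; split=> [|r]; last by rewrite mulrA => /(Loc_divr Lt) /(Loc_divr Ls).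
case: Ls Lt => [[p [Pp ->]] _] [[q [Pq ->]] _].
exists (p + q + p * q); split; last by ring.
by apply: pos_add; [exact: pos_add | exact: pos_mul].
Qed.

Lemma Loc_mulIr s x : Loc le s -> x * s = 0 -> x = 0.
Proof.
move=> Ls xs0; apply: pos_anti; apply: (Loc_divr Ls).
  by rewrite xs0; exact: pos0.
by rewrite mulNr xs0 oppr0; exact: pos0.
Qed.

Local Notation bd := (in_bd le).

Definition frac_add (p q : A * A) := (p.1 * q.2 + q.1 * p.2, p.2 * q.2).
Definition frac_mul (p q : A * A) := (p.1 * q.1, p.2 * q.2).
Definition frac_opp (p : A * A) := (- p.1, p.2).
Definition frac_eq (p q : A * A) := p.1 * q.2 = q.1 * p.2.

Lemma in_bdE p :
  bd p <-> Loc le p.2 /\ exists n : nat, P (n%:R * p.2 + p.1) /\ P (n%:R * p.2 - p.1).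
Proof.
rewrite /in_bd /loc_le /=; split=> -[Lp [n [lo hi]]]; split=> //; exists n.
  move/po_leP: lo; move/po_leP: hi; rewrite !mulr1 mulNr opprK => hi lo.
  by split; rewrite // addrC.
by split; apply/po_leP; rewrite mulr1 // mulNr opprK addrC.
Qed.

Lemma in_bd_Loc p : bd p -> Loc le p.2. Proof. by case/in_bdE. Qed.

Lemma in_bd_add p q : bd p -> bd q -> bd (frac_add p q).
Proof.
move=> /in_bdE [Lp [n [Pp1 Pp2]]] /in_bdE [Lq [m [Pq1 Pq2]]]; apply/in_bdE.
split; first exact: LocM; exists (n + m)%N; rewrite /frac_add /= natrD.
have Pp := Loc_pos Lp; have Pq := Loc_pos Lq; split.
- have -> : (n%:R + m%:R) * (p.2 * q.2) + (p.1 * q.2 + q.1 * p.2)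
     = q.2 * (n%:R * p.2 + p.1) + p.2 * (m%:R * q.2 + q.1) by ring.
  by apply: pos_add; apply: pos_mul.
- have -> : (n%:R + m%:R) * (p.2 * q.2) - (p.1 * q.2 + q.1 * p.2)
     = q.2 * (n%:R * p.2 - p.1) + p.2 * (m%:R * q.2 - q.1) by ring.
  by apply: pos_add; apply: pos_mul.
Qed.

Lemma in_bd_opp p : bd p -> bd (frac_opp p).
Proof.
move=> /in_bdE [Lp [n [Pp1 Pp2]]]; apply/in_bdE; split=> //; exists n.
by rewrite /frac_opp /= opprK.
Qed.

Lemma in_bd_mul p q : bd p -> bd q -> bd (frac_mul p q).
Proof.
move=> /in_bdE [Lp [n [Pp1 Pp2]]] /in_bdE [Lq [m [Pq1 Pq2]]]; apply/in_bdE.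
split; first exact: LocM; exists (n * m)%N; rewrite /frac_mul /= natrM.
split; apply: (Loc_divr (nL (isT : 0 < 2)%N)); rewrite mulrC.
- have -> : 2%:R * (n%:R * m%:R * (p.2 * q.2) + p.1 * q.1)
     = (n%:R * p.2 + p.1) * (m%:R * q.2 + q.1) + (n%:R * p.2 - p.1) * (m%:R * q.2 - q.1) by ring.
  by apply: pos_add; apply: pos_mul.
- have -> : 2%:R * (n%:R * m%:R * (p.2 * q.2) - p.1 * q.1)
     = (n%:R * p.2 - p.1) * (m%:R * q.2 + q.1) + (n%:R * p.2 + p.1) * (m%:R * q.2 - q.1) by ring.
  by apply: pos_add; apply: pos_mul.
Qed.

Lemma in_bd_nat (k : nat) : bd (k%:R, 1).
Proof.
apply/in_bdE; split; first exact: Loc1.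
by exists k; rewrite /= mulr1 subrr -natrD; split; [exact: pos_nat | exact: pos0].
Qed.

Lemma in_bd_inv s : Loc le s -> bd (1, s).
Proof.
move=> Ls; apply/in_bdE; split=> //; exists 1%N; rewrite mul1r.
by split; [apply: pos_add; [exact: Loc_pos | exact: pos1] | exact: Loc_subr1].
Qed.

Lemma in_bd_mulr_den r s t : bd (r, s) -> Loc le t -> bd (r, s * t).
Proof.
move=> /in_bdE [Ls [n [Pr1 Pr2]]] Lt; apply/in_bdE; split; first exact: LocM.
have Pst : P (n%:R * (s * t - s)).
  apply: pos_mul; first exact: pos_nat.
  by rewrite -{2}[s]mulr1 -mulrBr; apply: pos_mul; [exact: Loc_pos | exact: Loc_subr1].
exists n; split=> /=.
- have -> : n%:R * (s * t) + r = n%:R * (s * t - s) + (n%:R * s + r) by ring.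
  exact: pos_add.
- have -> : n%:R * (s * t) - r = n%:R * (s * t - s) + (n%:R * s - r) by ring.
  exact: pos_add.
Qed.

Lemma frac_eqE p q : frac_eq p q <-> p.1 * q.2 - q.1 * p.2 = 0.
Proof. by rewrite /frac_eq; split=> [->|/eqP]; rewrite ?subrr // subr_eq0 => /eqP. Qed.

Lemma frac_eq_refl p : frac_eq p p. Proof. by rewrite /frac_eq mulrC. Qed.
Lemma frac_eq_sym p q : frac_eq p q -> frac_eq q p. Proof. by rewrite /frac_eq => ->. Qed.

Lemma frac_eq_trans q p r : Loc le q.2 -> frac_eq p q -> frac_eq q r -> frac_eq p r.
Proof.
move=> Lq /frac_eqE pq /frac_eqE qr; apply/frac_eqE; apply: (Loc_mulIr Lq).
have -> : (p.1 * r.2 - r.1 * p.2) * q.2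
    = (p.1 * q.2 - q.1 * p.2) * r.2 + (q.1 * r.2 - r.1 * q.2) * p.2 by ring.
by rewrite pq qr !mul0r addr0.
Qed.

Lemma frac_eq_add p p' q q' : frac_eq p p' -> frac_eq q q' ->
  frac_eq (frac_add p q) (frac_add p' q').
Proof.
move=> /frac_eqE pp' /frac_eqE qq'; apply/frac_eqE; rewrite /frac_add /=.
have -> : (p.1 * q.2 + q.1 * p.2) * (p'.2 * q'.2) - (p'.1 * q'.2 + q'.1 * p'.2) * (p.2 * q.2)
    = (p.1 * p'.2 - p'.1 * p.2) * (q.2 * q'.2) + (q.1 * q'.2 - q'.1 * q.2) * (p.2 * p'.2) by ring.
by rewrite pp' qq' !mul0r addr0.
Qed.

Lemma frac_eq_mul p p' q q' : frac_eq p p' -> frac_eq q q' ->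
  frac_eq (frac_mul p q) (frac_mul p' q').
Proof.
move=> /frac_eqE pp' /frac_eqE qq'; apply/frac_eqE; rewrite /frac_mul /=.
have -> : p.1 * q.1 * (p'.2 * q'.2) - p'.1 * q'.1 * (p.2 * q.2)
    = (p.1 * p'.2 - p'.1 * p.2) * (q.1 * q'.2) + (p'.1 * p.2) * (q.1 * q'.2 - q'.1 * q.2) by ring.
by rewrite pp' qq' mul0r mulr0 addr0.
Qed.

Lemma frac_eq_opp p p' : frac_eq p p' -> frac_eq (frac_opp p) (frac_opp p').
Proof. by rewrite /frac_eq /frac_opp /= !mulNr => ->. Qed.

Lemma frac_eq_pos p q : Loc le p.2 -> Loc le q.2 -> frac_eq p q -> P p.1 -> P q.1.
Proof.
by move=> Lp Lq pq Pp; apply: (Loc_divr Lp); rewrite -pq; apply: pos_mul Pp (Loc_pos Lq).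
Qed.

Definition bd_class p : set (A * A) := [set q | bd q /\ frac_eq q p].

End PartiallyOrderedRing.

(* The ring R^bd_loc, realised as the classes of bounded fractions. *)
Record bdloc (A : comPzRingType) (le : A -> A -> Prop) (po : po_comring le)
    (nL : nat_in_Loc le) := Bdloc {
  bdloc_class : set (A * A);
  bdloc_classP : exists2 p, in_bd le p & bdloc_class = bd_class le p }.

Section BoundedLocalization.
Variables (A : comPzRingType) (le : A -> A -> Prop).
Variables (po : po_comring le) (nL : nat_in_Loc le).
Local Notation bd := (in_bd le).
Local Notation B := (bdloc po nL).

Lemma in_bd01 : bd (0, 1). Proof. exact: (in_bd_nat po 0). Qed.
Lemma in_bd11 : bd (1, 1). Proof. exact: (in_bd_nat po 1). Qed.

(* Non-bounded pairs are sent to the class of 0, an arbitrary junk value. *)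
Definition bd_fix p := if pselect (bd p) then p else (0, 1).

Lemma bd_fixP p : bd (bd_fix p).
Proof. by rewrite /bd_fix; destruct (pselect (bd p)) => //; exact: in_bd01. Qed.

Lemma bd_fixE p : bd p -> bd_fix p = p.
Proof. by rewrite /bd_fix; destruct (pselect (bd p)). Qed.

Definition to_bdloc p : B := Bdloc po nL (ex_intro2 _ _ _ (bd_fixP p) erefl).

Lemma bdloc_ext (x y : B) : bdloc_class x = bdloc_class y -> x = y.
Proof.
case: x => X HX; case: y => Y HY /= XY; subst Y.
by rewrite (Prop_irrelevance HX HY).
Qed.

Lemma to_bdloc_eq p q : bd p -> bd q -> to_bdloc p = to_bdloc q <-> frac_eq p q.
Proof.
move=> bp bq; split=> [/(congr1 (@bdloc_class _ _ _ _))|pq].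
  rewrite /= !bd_fixE // => classE.
  have : bd_class le q p by rewrite -classE; split=> //; exact: frac_eq_refl.
  by case.
apply: bdloc_ext; rewrite /= !bd_fixE //; apply/seteqP; split=> r [br rE]; split=> //.
- exact: frac_eq_trans (in_bd_Loc po bp) rE pq.
- exact: frac_eq_trans (in_bd_Loc po bq) rE (frac_eq_sym pq).
Qed.

Lemma to_bdlocP (x : B) : exists2 p, bd p & x = to_bdloc p.
Proof. by case: x => X [p bp XE]; exists p => //; apply: bdloc_ext; rewrite /= bd_fixE. Qed.

Definition bdloc_repr (x : B) : A * A := projT1 (cid2 (to_bdlocP x)).

Lemma bdloc_repr_bd (x : B) : bd (bdloc_repr x).
Proof. by rewrite /bdloc_repr; case: cid2. Qed.

Lemma bdloc_reprK (x : B) : to_bdloc (bdloc_repr x) = x.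
Proof. by rewrite /bdloc_repr; case: cid2. Qed.

Lemma bdloc_repr_eq p : bd p -> frac_eq (bdloc_repr (to_bdloc p)) p.
Proof. by move=> bp; apply/to_bdloc_eq; rewrite ?bdloc_reprK //; exact: bdloc_repr_bd. Qed.

Definition bdloc_zero : B := to_bdloc (0, 1).
Definition bdloc_one : B := to_bdloc (1, 1).
Definition bdloc_add (x y : B) : B := to_bdloc (frac_add (bdloc_repr x) (bdloc_repr y)).
Definition bdloc_mul (x y : B) : B := to_bdloc (frac_mul (bdloc_repr x) (bdloc_repr y)).
Definition bdloc_opp (x : B) : B := to_bdloc (frac_opp (bdloc_repr x)).

Let bd_add := in_bd_add po.
Let bd_mul := in_bd_mul po nL.
Let bd_opp := in_bd_opp po.

Lemma bdloc_add_to p q : bd p -> bd q ->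
  bdloc_add (to_bdloc p) (to_bdloc q) = to_bdloc (frac_add p q).
Proof.
move=> bp bq; apply/to_bdloc_eq; try apply: bd_add => //; try exact: bdloc_repr_bd.
by apply: frac_eq_add; exact: bdloc_repr_eq.
Qed.

Lemma bdloc_mul_to p q : bd p -> bd q ->
  bdloc_mul (to_bdloc p) (to_bdloc q) = to_bdloc (frac_mul p q).
Proof.
move=> bp bq; apply/to_bdloc_eq; try apply: bd_mul => //; try exact: bdloc_repr_bd.
by apply: frac_eq_mul; exact: bdloc_repr_eq.
Qed.

Lemma bdloc_opp_to p : bd p -> bdloc_opp (to_bdloc p) = to_bdloc (frac_opp p).
Proof.
move=> bp; apply/to_bdloc_eq; try apply: bd_opp => //; try exact: bdloc_repr_bd.
by apply: frac_eq_opp; exact: bdloc_repr_eq.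
Qed.

Lemma bdloc_addA : associative bdloc_add.
Proof.
move=> x y z; have [p bp ->] := to_bdlocP x; have [q bq ->] := to_bdlocP y.
have [r br ->] := to_bdlocP z.
rewrite !bdloc_add_to //; try by repeat apply: bd_add.
by apply/to_bdloc_eq; try (by repeat apply: bd_add); rewrite /frac_eq /frac_add /=; ring.
Qed.

Lemma bdloc_addC : commutative bdloc_add.
Proof.
move=> x y; have [p bp ->] := to_bdlocP x; have [q bq ->] := to_bdlocP y.
rewrite !bdloc_add_to //; apply/to_bdloc_eq; try exact: bd_add.
by rewrite /frac_eq /frac_add /=; ring.
Qed.

Lemma bdloc_add0 : left_id bdloc_zero bdloc_add.
Proof.
move=> x; have [p bp ->] := to_bdlocP x; rewrite bdloc_add_to //; last exact: in_bd01.
apply/to_bdloc_eq => //; first by apply: bd_add => //; exact: in_bd01.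
by rewrite /frac_eq /frac_add /=; ring.
Qed.

Lemma bdloc_addN : left_inverse bdloc_zero bdloc_opp bdloc_add.
Proof.
move=> x; have [p bp ->] := to_bdlocP x.
rewrite bdloc_opp_to // bdloc_add_to //; last exact: bd_opp.
apply/to_bdloc_eq; [by apply: bd_add => //; exact: bd_opp | exact: in_bd01 |].
by rewrite /frac_eq /frac_add /frac_opp /=; ring.
Qed.

Lemma bdloc_mulA : associative bdloc_mul.
Proof.
move=> x y z; have [p bp ->] := to_bdlocP x; have [q bq ->] := to_bdlocP y.
have [r br ->] := to_bdlocP z.
rewrite !bdloc_mul_to //; try by repeat apply: bd_mul.
by apply/to_bdloc_eq; try (by repeat apply: bd_mul); rewrite /frac_eq /frac_mul /=; ring.
Qed.

Lemma bdloc_mulC : commutative bdloc_mul.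
Proof.
move=> x y; have [p bp ->] := to_bdlocP x; have [q bq ->] := to_bdlocP y.
rewrite !bdloc_mul_to //; apply/to_bdloc_eq; try exact: bd_mul.
by rewrite /frac_eq /frac_mul /=; ring.
Qed.

Lemma bdloc_mul1 : left_id bdloc_one bdloc_mul.
Proof.
move=> x; have [p bp ->] := to_bdlocP x; rewrite bdloc_mul_to //; last exact: in_bd11.
apply/to_bdloc_eq => //; first by apply: bd_mul => //; exact: in_bd11.
by rewrite /frac_eq /frac_mul /=; ring.
Qed.

Lemma bdloc_mulDl : left_distributive bdloc_mul bdloc_add.
Proof.
move=> x y z; have [p bp ->] := to_bdlocP x; have [q bq ->] := to_bdlocP y.
have [r br ->] := to_bdlocP z.
rewrite (bdloc_add_to bp bq) (bdloc_mul_to (bd_add bp bq) br) (bdloc_mul_to bp br).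
rewrite (bdloc_mul_to bq br) (bdloc_add_to (bd_mul bp br) (bd_mul bq br)).
apply/to_bdloc_eq.
- exact: bd_mul (bd_add bp bq) br.
- exact: bd_add (bd_mul bp br) (bd_mul bq br).
- by rewrite /frac_eq /frac_mul /frac_add /=; ring.
Qed.

End BoundedLocalization.

HB.instance Definition _ (A : comPzRingType) (le : A -> A -> Prop) (po : po_comring le)
  (nL : nat_in_Loc le) := gen_eqMixin (bdloc po nL).
HB.instance Definition _ (A : comPzRingType) (le : A -> A -> Prop) (po : po_comring le)
  (nL : nat_in_Loc le) := gen_choiceMixin (bdloc po nL).
HB.instance Definition _ (A : comPzRingType) (le : A -> A -> Prop) (po : po_comring le)
  (nL : nat_in_Loc le) := GRing.isZmodule.Build (bdloc po nL)
  (@bdloc_addA A le po nL) (@bdloc_addC A le po nL)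
  (@bdloc_add0 A le po nL) (@bdloc_addN A le po nL).
HB.instance Definition _ (A : comPzRingType) (le : A -> A -> Prop) (po : po_comring le)
  (nL : nat_in_Loc le) := GRing.Zmodule_isComPzRing.Build (bdloc po nL)
  (@bdloc_mulA A le po nL) (@bdloc_mulC A le po nL)
  (@bdloc_mul1 A le po nL) (@bdloc_mulDl A le po nL).

Section BoundedLocalizationCone.
Variables (A : comPzRingType) (le : A -> A -> Prop).
Variables (po : po_comring le) (nL : nat_in_Loc le).
Local Notation bd := (in_bd le).
Local Notation B := (bdloc po nL).
Local Notation P x := (le 0 x).
Local Notation pi := (@to_bdloc A le po nL).
Let bd_add := in_bd_add po.
Let bd_mul := in_bd_mul po nL.
Let bd_opp := in_bd_opp po.
Let bd_nat := in_bd_nat po.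

Lemma to_bdlocD p q : bd p -> bd q -> pi p + pi q = pi (frac_add p q).
Proof. exact: bdloc_add_to. Qed.

Lemma to_bdlocM p q : bd p -> bd q -> pi p * pi q = pi (frac_mul p q).
Proof. exact: bdloc_mul_to. Qed.

Lemma to_bdlocN p : bd p -> - pi p = pi (frac_opp p).
Proof. exact: bdloc_opp_to. Qed.

Lemma to_bdloc1 : 1 = pi (1, 1) :> B. Proof. by []. Qed.

Lemma to_bdloc_nat (k : nat) : k%:R = pi (k%:R, 1) :> B.
Proof.
elim: k => [|k IH].
  by apply/to_bdloc_eq; [exact: in_bd01 | exact: bd_nat | rewrite /frac_eq /=; ring].
rewrite mulrS IH to_bdloc1 to_bdlocD; [|exact: in_bd11 | exact: bd_nat].
apply/to_bdloc_eq; [apply: bd_add; [exact: in_bd11 | exact: bd_nat] | exact: bd_nat |].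
by rewrite /frac_eq /frac_add /= mulrS; ring.
Qed.

Definition bdloc_pos (x : B) := exists p, [/\ bd p, x = pi p & P p.1].

Lemma bdloc_posP p : bd p -> bdloc_pos (pi p) <-> P p.1.
Proof.
move=> bp; split=> [[q [bq /(to_bdloc_eq _ _ bp bq) pq Pq]]|Pp]; last by exists p.
exact: (frac_eq_pos po (in_bd_Loc po bq) (in_bd_Loc po bp) (frac_eq_sym pq) Pq).
Qed.

Lemma bdloc_pos_inv s : Loc le s -> bdloc_pos (pi (1, s)).
Proof. by move=> Ls; apply/bdloc_posP; [exact: in_bd_inv | exact: (pos1 po)]. Qed.

Lemma to_bdloc_mul_den r s t : bd (r, s) -> Loc le t -> pi (r, s * t) = pi (r, s) * pi (1, t).
Proof.
move=> brs Lt; rewrite to_bdlocM //; last exact: in_bd_inv.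
by rewrite /frac_mul /= mulr1.
Qed.

Lemma bdloc_pos_natD (n : nat) p : bd p ->
  bdloc_pos (n%:R + pi p) <-> P (n%:R * p.2 + p.1).
Proof.
move=> bp; have bn := bd_nat n; rewrite to_bdloc_nat to_bdlocD // bdloc_posP /= ?mulr1 //.
exact: bd_add.
Qed.

Lemma bdloc_pos_natB (n : nat) p : bd p ->
  bdloc_pos (n%:R - pi p) <-> P (n%:R * p.2 - p.1).
Proof. by move=> bp; rewrite to_bdlocN // bdloc_pos_natD //; exact: bd_opp. Qed.

Lemma bdloc_pos_add x y : bdloc_pos x -> bdloc_pos y -> bdloc_pos (x + y).
Proof.
move=> [p [bp -> Pp]] [q [bq -> Pq]]; rewrite to_bdlocD //.
apply/bdloc_posP; first exact: bd_add.
have Pp2 := Loc_pos po (in_bd_Loc po bp); have Pq2 := Loc_pos po (in_bd_Loc po bq).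
by apply: (pos_add po); apply: (pos_mul po).
Qed.

Lemma bdloc_pos_mul x y : bdloc_pos x -> bdloc_pos y -> bdloc_pos (x * y).
Proof.
move=> [p [bp -> Pp]] [q [bq -> Pq]]; rewrite to_bdlocM //.
by apply/bdloc_posP; [exact: bd_mul | exact: (pos_mul po)].
Qed.

Lemma bdloc_pos_sq x : bdloc_pos (x * x).
Proof.
have [p bp ->] := to_bdlocP x; rewrite to_bdlocM //.
by apply/bdloc_posP; [exact: bd_mul | exact: (pos_sq po)].
Qed.

Lemma bdloc_pos_arch x : exists n : nat, bdloc_pos (n%:R - x) /\ bdloc_pos (n%:R + x).
Proof.
have [p bp ->] := to_bdlocP x; have [_ [n [Pn1 Pn2]]] := (in_bdE po p).1 bp.
by exists n; split; [apply/bdloc_pos_natB | apply/bdloc_pos_natD].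
Qed.

Lemma bdloc_pos_invn (n : nat) : (0 < n)%N -> exists2 y, bdloc_pos y & n%:R * y = 1.
Proof.
move=> n_gt0; have bn := in_bd_inv po (nL n_gt0).
exists (pi (1, n%:R)); first by apply/bdloc_posP => //; exact: (pos1 po).
have bn' := bd_nat n; rewrite to_bdloc_nat to_bdlocM //.
apply/to_bdloc_eq; [exact: bd_mul | exact: in_bd11 |].
by rewrite /frac_eq /frac_mul /=; ring.
Qed.

End BoundedLocalizationCone.

Section Characters.
Variables (A : comPzRingType) (le : A -> A -> Prop).
Variables (po : po_comring le) (nL : nat_in_Loc le).
Local Notation bd := (in_bd le).
Local Notation B := (bdloc po nL).
Local Notation P x := (le 0 x).
Local Notation pi := (@to_bdloc A le po nL).
Let bd_add := in_bd_add po.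
Let bd_mul := in_bd_mul po nL.

Definition char_of_hom (G : B -> R) : charT A :=
  fun p => if pselect (bd p) then G (pi p) else 0.

Lemma char_of_homE G p : bd p -> char_of_hom G p = G (pi p).
Proof. by rewrite /char_of_hom; destruct (pselect (bd p)). Qed.

Lemma char_of_hom_is_char (G : B -> R) :
  (forall x y, G (x + y) = G x + G y) -> (forall x y, G (x * y) = G x * G y) -> G 1 = 1 ->
  (forall x, bdloc_pos x -> 0 <= G x) -> is_char le (char_of_hom G).
Proof.
move=> GD GM G1 G_ge0; split; [|split; [|split; [|split; [|split]]]].
- by move=> p Nbp; rewrite /char_of_hom; destruct (pselect (bd p)).
- by move=> p q bp bq pq; rewrite !char_of_homE //; congr G; apply/to_bdloc_eq.
- by move=> p q bp bq; rewrite !char_of_homE -?GD ?to_bdlocD //; exact: bd_add.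
- by move=> p q bp bq; rewrite !char_of_homE -?GM ?to_bdlocM //; exact: bd_mul.
- by rewrite char_of_homE //; exact: in_bd11.
- move=> p bp; rewrite /loc_le /= mul0r mulr1 char_of_homE // => Pp.
  by apply/G_ge0/bdloc_posP.
Qed.

Section HomOfChar.
Variable phi : charT A.
Hypothesis phi_char : is_char le phi.

Definition hom_of_char (x : B) : R := phi (bdloc_repr x).

Lemma hom_of_charE p : bd p -> hom_of_char (pi p) = phi p.
Proof.
move=> bp; have [_ [phi_eq _]] := phi_char.
by apply: phi_eq => //; [exact: bdloc_repr_bd | exact: bdloc_repr_eq].
Qed.

Lemma hom_of_charD x y : hom_of_char (x + y) = hom_of_char x + hom_of_char y.
Proof.
have [p bp ->] := to_bdlocP x; have [q bq ->] := to_bdlocP y.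
rewrite to_bdlocD // !hom_of_charE //; last exact: bd_add.
by have [_ [_ [phiD _]]] := phi_char; apply: phiD.
Qed.

Lemma hom_of_charM x y : hom_of_char (x * y) = hom_of_char x * hom_of_char y.
Proof.
have [p bp ->] := to_bdlocP x; have [q bq ->] := to_bdlocP y.
rewrite to_bdlocM // !hom_of_charE //; last exact: bd_mul.
by have [_ [_ [_ [phiM _]]]] := phi_char; apply: phiM.
Qed.

Lemma hom_of_char1 : hom_of_char 1 = 1.
Proof.
rewrite to_bdloc1 hom_of_charE; last exact: in_bd11.
by have [_ [_ [_ [_ []]]]] := phi_char.
Qed.

Lemma hom_of_char_ge0 x : bdloc_pos x -> 0 <= hom_of_char x.
Proof.
move=> [p [bp -> Pp]]; rewrite hom_of_charE //.
have [_ [_ [_ [_ [_ phi_ge0]]]]] := phi_char; apply: phi_ge0 => //.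
by rewrite /loc_le /= mul0r mulr1.
Qed.

Lemma hom_of_char_nat (k : nat) : hom_of_char k%:R = k%:R.
Proof. by rewrite (additiveMn hom_of_charD) hom_of_char1. Qed.

Lemma char_bound p (n : nat) : bd p -> P (n%:R * p.2 + p.1) -> P (n%:R * p.2 - p.1) ->
  - n%:R <= phi p <= n%:R.
Proof.
move=> bp Pn1 Pn2.
have := hom_of_char_ge0 ((bdloc_pos_natD po nL _ bp).2 Pn1).
have := hom_of_char_ge0 ((bdloc_pos_natB po nL _ bp).2 Pn2).
rewrite (additiveB hom_of_charD) hom_of_charD hom_of_char_nat hom_of_charE // => *.
by apply/andP; split; lra.
Qed.

Lemma char_mul_den r s t : bd (r, s) -> Loc le t -> phi (r, s * t) = phi (r, s) * phi (1, t).
Proof.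
move=> brs Lt; have brst := in_bd_mulr_den po brs Lt; have bt := in_bd_inv po Lt.
by rewrite -!hom_of_charE // to_bdloc_mul_den // hom_of_charM.
Qed.

Lemma char_inv_ge0 s : Loc le s -> 0 <= phi (1, s).
Proof.
move=> Ls; rewrite -hom_of_charE; last exact: in_bd_inv.
exact/hom_of_char_ge0/bdloc_pos_inv.
Qed.

End HomOfChar.
End Characters.

Section GelfandPositivity.
Variables (A : comPzRingType) (le : A -> A -> Prop).
Variables (po : po_comring le) (nL : nat_in_Loc le).
Local Notation bd := (in_bd le).
Local Notation P x := (le 0 x).
Local Notation pi := (@to_bdloc A le po nL).

Lemma O_finM s t : Loc le s -> Loc le t -> O_fin le (s * t) = O_fin le s `&` O_fin le t.
Proof.
move=> Ls Lt; apply/seteqP; split=> phi.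
- move=> [Kphi]; rewrite (char_mul_den po nL Kphi (in_bd_inv po Ls) Lt) => st_gt0.
  have := char_inv_ge0 po nL Kphi Ls; have := char_inv_ge0 po nL Kphi Lt.
  by move=> *; split; split=> //; nra.
- move=> [[Kphi phis] [_ phit]]; split=> //.
  by rewrite (char_mul_den po nL Kphi (in_bd_inv po Ls) Lt); exact: mulr_gt0.
Qed.

Lemma gelfand_rep_ge0 r s (phi : charT A) :
  0 < phi (1, s) -> (0 <= gelfand_rep r s phi) = (0 <= phi (r, s)).
Proof. by move=> phis; rewrite /gelfand_rep pmulr_rge0 // invr_gt0. Qed.

Lemma dagger_char_ge0 (phi : charT A) r h s t : is_char le phi -> Loc le s -> Loc le t ->
  bd (r, s) -> P (t + h) -> P (t - h) -> (forall k : nat, (0 < k)%N -> P (k%:R * r + h)) ->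
  0 < phi (1, t) -> 0 <= phi (r, s).
Proof.
move=> Kphi Ls Lt brs Pth Pht Pkrh phit.
pose G : bdloc po nL -> R := hom_of_char phi.
have GE p : bd p -> G (pi p) = phi p by exact: hom_of_charE.
have GD : forall x y, G (x + y) = G x + G y by exact: hom_of_charD.
have GM : forall x y, G (x * y) = G x * G y by exact: hom_of_charM.
have Gnat k : G k%:R = k%:R by exact: hom_of_char_nat.
have G_ge0 x : bdloc_pos x -> 0 <= G x by exact: hom_of_char_ge0.
have Lst := LocM po Ls Lt; have brst := in_bd_mulr_den po brs Lt.
have Pst : P (s * t - t).
  by rewrite -{2}[t]mul1r -mulrBl; apply: (pos_mul po); [exact: Loc_subr1 | exact: Loc_pos].
have bh : bd (h, s * t).
  rewrite mulrC; apply: (in_bd_mulr_den po) Ls.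
  by apply/(in_bdE po); split=> //; exists 1%N; rewrite mul1r.
have Gh_le1 : G (pi (h, s * t)) <= 1.
  have P1h : P (1%:R * (h, s * t).2 - (h, s * t).1).
    by rewrite /= mul1r -(subrK t (s * t)) -addrA; apply: (pos_add po).
  have := G_ge0 _ ((bdloc_pos_natB po nL _ bh).2 P1h).
  by rewrite (additiveB GD) Gnat subr_ge0.
have Gkrh k : (0 < k)%N -> 0 <= k%:R * G (pi (r, s * t)) + G (pi (h, s * t)).
  move=> k_gt0; rewrite -Gnat -GM -GD.
  apply: G_ge0; rewrite to_bdloc_nat to_bdlocM ?to_bdlocD //; try exact: in_bd_nat.
  - apply/bdloc_posP; first by apply: in_bd_add => //; apply: in_bd_mul => //; exact: in_bd_nat.
    have -> : (frac_add (frac_mul (k%:R, 1) (r, s * t)) (h, s * t)).1 = (k%:R * r + h) * (s * t)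
      by rewrite /frac_add /frac_mul /=; ring.
    by apply: (pos_mul po); [exact: Pkrh | exact: Loc_pos].
  - by apply: in_bd_mul => //; exact: in_bd_nat.
have : 0 <= G (pi (r, s * t)).
  by apply: (@natmul_lbounded_ge0 _ _ 1) => k /Gkrh; lra.
by rewrite GE // (char_mul_den po nL Kphi brs Lt) pmulr_lge0.
Qed.

Lemma pos_dagger_gelfand_nonneg r : localizable le -> pos_dagger le r -> gelfand_nonneg le r.
Proof.
move=> Aloc [h Pkrh].
have [s [Ls [Nsr rs]]] := Aloc r; have [t [Lt [Nth ht]]] := Aloc h.
move/(po_leP po): Nsr; move/(po_leP po): rs; move/(po_leP po): Nth; move/(po_leP po): ht.
rewrite !opprK ![_ + s]addrC ![_ + t]addrC => Pht Pth Prs Psr.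
have brs : bd (r, s) by apply/(in_bdE po); split=> //; exists 1%N; rewrite mul1r.
exists s; split=> //; split=> //; exists (O_fin le (s * t)).
split; first by exists (s * t); split=> //; exact: LocM.
rewrite O_finM //; split=> [phi [] //|phi [[Kphi phis] [_ phit]]].
by rewrite gelfand_rep_ge0 //; exact: (dagger_char_ge0 Kphi Ls Lt brs Pth Pht Pkrh phit).
Qed.

Lemma gelfand_nonneg_pos_dagger r : gelfand_nonneg le r -> pos_dagger le r.
Proof.
move=> [s [Ls [brs [_ [[t [Lt ->]] [Ots rep_ge0]]]]]].
exists (s * t) => k k_gt0; apply: contrapT => NPk.
have brst := in_bd_mulr_den po brs Lt; have bt := in_bd_inv po Lt.
have NPb : ~ bdloc_pos (k%:R * pi (r, s * t) + 1).
  have bk := in_bd_nat po k; have bkb := in_bd_mul po nL bk brst.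
  rewrite addrC to_bdloc_nat to_bdlocM //.
  change (~ bdloc_pos (1%:R + pi (k%:R * r, 1 * (s * t)))).
  by rewrite bdloc_pos_natD // /= !mul1r addrC.
have [G [GD GM G1 G_ge0]] := Kadison_Dubois (@bdloc_pos_add _ _ po nL) (@bdloc_pos_mul _ _ po nL)
  (@bdloc_pos_sq _ _ po nL) (@bdloc_pos_arch _ _ po nL) (bdloc_pos_invn po nL) R k_gt0 NPb.
rewrite to_bdloc_mul_den // GM => Grst_lt0.
have Kphi := char_of_hom_is_char GD GM G1 G_ge0.
have Gt_gt0 : 0 < G (pi (1, t)).
  rewrite lt0r G_ge0 ?andbT; last exact: bdloc_pos_inv.
  by apply: contraTneq Grst_lt0 => ->; rewrite mulr0 ltxx.
have Ot : O_fin le t (char_of_hom G) by split; rewrite // char_of_homE.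
have [_ phis] := Ots _ Ot; have := rep_ge0 _ Ot.
rewrite gelfand_rep_ge0 // char_of_homE // => Grs_ge0.
nra.
Qed.

End GelfandPositivity.

Section ClosedSets.
Variable T : topologicalType.

Lemma closed_forall (I : Type) (S : I -> set T) :
  (forall i, closed (S i)) -> closed [set x | forall i, S i x].
Proof.
move=> Scl; have -> : [set x | forall i, S i x] = \bigcap_(i in setT) S i.
  by apply/seteqP; split=> x /= Sx i //; exact: Sx.
by apply: closed_bigI => i _; exact: Scl.
Qed.

Lemma closed_implies (Q : Prop) (S : set T) : closed S -> closed [set x | Q -> S x].
Proof.
move=> Scl; have [q|Nq] := pselect Q.
  have -> : [set x | Q -> S x] = S by apply/seteqP; split=> x /= => [|Sx _]; [apply | ].
  exact: Scl.
have -> : [set x | Q -> S x] = setT by apply/seteqP; split=> x // _ /Nq.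
exact: closedT.
Qed.

Lemma closed_eq_continuous (f g : T -> R) :
  continuous f -> continuous g -> closed [set x | f x = g x].
Proof.
move=> fc gc; have -> : [set x | f x = g x] = (fun x => f x - g x) @^-1` [set 0].
  by apply/seteqP; split=> x /=; [move->; rewrite subrr | move/eqP; rewrite subr_eq0 => /eqP].
apply: preimage_closed; last exact: closed_eq.
move=> x _; exact: (@continuousB R R^o T (fun x => f x : R^o) (fun x => g x : R^o) x (fc x) (gc x)).
Qed.

Lemma closed_ge0_continuous (f : T -> R) : continuous f -> closed [set x | 0 <= f x].
Proof.
move=> fc; rewrite -[X in closed X]/(f @^-1` [set y | 0 <= y]).
by apply: preimage_closed; [move=> x _; exact: fc | exact: closed_ge].
Qed.

End ClosedSets.

Section CharacterSpaceTopology.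
Variables (A : comPzRingType) (le : A -> A -> Prop).
Variables (po : po_comring le) (nL : nat_in_Loc le).
Local Notation bd := (in_bd le).

Lemma eval_continuous (p : A * A) : continuous (fun f : charT A => f p).
Proof. exact: (@proj_continuous _ (fun _ : A * A => R) p). Qed.

Lemma Kspace_closed : closed (Kspace le).
Proof.
have evalD p q : continuous (fun f : charT A => f p + f q).
  move=> f; have fpq := @continuousD R R^o _ (fun g : charT A => (g p : R^o))
    (fun g : charT A => (g q : R^o)) f (@eval_continuous p f) (@eval_continuous q f).
  exact: fpq.
have evalM p q : continuous (fun f : charT A => f p * f q).
  by move=> f; apply: continuousM; exact: eval_continuous.
rewrite /Kspace /is_char.
apply: closedI; [|apply: closedI; [|apply: closedI; [|apply: closedI; [|apply: closedI]]]].
- apply: closed_forall => p; apply: closed_implies.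
  by apply: closed_eq_continuous; [exact: eval_continuous | exact: cst_continuous].
- do 2 (apply: closed_forall => ?); do 3 apply: closed_implies.
  by apply: closed_eq_continuous; exact: eval_continuous.
- do 2 (apply: closed_forall => ?); do 2 apply: closed_implies.
  by apply: closed_eq_continuous; [exact: eval_continuous | exact: evalD].
- do 2 (apply: closed_forall => ?); do 2 apply: closed_implies.
  by apply: closed_eq_continuous; [exact: eval_continuous | exact: evalM].
- by apply: closed_eq_continuous; [exact: eval_continuous | exact: cst_continuous].
- apply: closed_forall => p; do 2 apply: closed_implies.
  by apply: closed_ge0_continuous; exact: eval_continuous.
Qed.

(* Non-bounded pairs get the junk bound 0, harmless since characters vanish on them. *)
Definition frac_bound (p : A * A) : R :=
  if pselect (bd p) is left bp then (projT1 (cid ((in_bdE po p).1 bp).2))%:R else 0.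

Lemma Kspace_sub_box :
  Kspace le `<=` [set f : charT A | forall p, `[- frac_bound p, frac_bound p]%classic (f p)].
Proof.
move=> phi Kphi p; rewrite /frac_bound /= in_itv /=.
case: (pselect (bd p)) => [bp|Nbp].
  by case: cid => n [Pn1 Pn2] /=; exact: (char_bound po nL Kphi bp Pn1 Pn2).
by have [phi0 _] := Kphi; rewrite phi0 // oppr0 lexx.
Qed.

Lemma Kspace_compact : compact (Kspace le).
Proof.
apply: subclosed_compact Kspace_closed _ Kspace_sub_box.
exact: (@tychonoff _ (fun _ => R) _ (fun p => @segment_compact _ _ _)).
Qed.

Lemma Kspace_hausdorff : hausdorff_space (subspace (Kspace le)).
Proof.
apply: subspace_hausdorff.
exact: (@hausdorff_product _ (fun _ : A * A => R) (fun _ => @Rhausdorff R)).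
Qed.

End CharacterSpaceTopology.

Theorem theorem27 (A : comPzRingType) (le : A -> A -> Prop) :
  po_comring le -> localizable le -> nat_in_Loc le ->
  [/\ compact (Kspace le),
      hausdorff_space (subspace (Kspace le)) &
      [set r | gelfand_nonneg le r] = pos_dagger le].
Proof.
move=> po Aloc nL; split.
- exact: Kspace_compact po nL.
- exact: Kspace_hausdorff.
- apply/seteqP; split=> r /=.
  + exact: gelfand_nonneg_pos_dagger po nL r.
  + exact: pos_dagger_gelfand_nonneg po nL r Aloc.
Qed.
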